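(* Let $n,d\ge2$, $c\in\mathbb{C}$, and $f=(x_0^d + c x_1^d : x_1^d : \dots : x_n^d)$, an endomorphism of $\mathbb{P}^n_{\mathbb{C}}$. Then the critical locus $C_f = V(x_0 x_1\cdots x_n)$ is dynamically improper under $f$, and $C_f$ is preperiodic under $f$ if and only if $0$ is preperiodic under $g(z)=z^d+c$.
   Context: The critical locus of $f=(f_0:\dots:f_n)$ is $C_f=V(\det(\partial f_i/\partial x_j))$. A hypersurface $H$ is improper under $f$ if for every irreducible component $Z$ of $H$ there exist integers $0\le i_0<\dots<i_n$ with $f^{i_0}(Z)\cap\dots\cap f^{i_n}(Z)\neq\varnothing$; it is dynamically improper if improper under $f^r$ for every $r>0$. A subvariety $X$ is preperiodic under $f$ if for every irreducible component $Z$ of $X$ there exist distinct $s,t\ge0$ with $f^s(Z)=f^t(Z)$. *)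

From HB Require Import structures.
From mathcomp Require Import all_boot all_order all_algebra.
From mathcomp Require Import reals Rstruct.
From mathcomp Require Import complex.
From mathcomp Require Import mpoly.

Set Implicit Arguments.
Unset Strict Implicit.
Unset Printing Implicit Defensive.

Import GRing.Theory.
Local Open Scope ring_scope.

Definition CC : Type := complex Rdefinitions.R.

(* Points of P^n are represented by (nonzero) vectors in C^(n+1);
   a subset of P^n is represented by a predicate on vectors which only
   holds on nonzero vectors and is invariant under nonzero scaling
   (all sets constructed below have this property). *)
Definition vec (n : nat) := 'I_n.+1 -> CC.
Definition pset (n : nat) := vec n -> Prop.

Definition nonzero n (v : vec n) : Prop := exists i, v i != 0.

Definition subset_p n (A B : pset n) : Prop := forall v, A v -> B v.
Definition eq_p n (A B : pset n) : Prop := forall v, A v <-> B v.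

Definition zclosed n (X : pset n) : Prop :=
  exists S : {mpoly CC[n.+1]} -> Prop,
    (forall p, S p -> exists k, p \is k.-homog) /\
    forall v, X v <-> (nonzero v /\ forall p, S p -> p.@[v] = 0).

Definition hyp n (p : {mpoly CC[n.+1]}) : pset n :=
  fun v => nonzero v /\ p.@[v] = 0.

Definition zirreducible n (Z : pset n) : Prop :=
  zclosed Z /\ (exists v, Z v) /\
  forall A B : pset n, zclosed A -> zclosed B ->
    subset_p Z (fun v => A v \/ B v) -> subset_p Z A \/ subset_p Z B.

Definition icomponent n (X Z : pset n) : Prop :=
  zirreducible Z /\ subset_p Z X /\
  forall W, zirreducible W -> subset_p Z W -> subset_p W X -> subset_p W Z.

Definition pmap n := 'I_n.+1 -> {mpoly CC[n.+1]}.

Definition evalmap n (f : pmap n) (v : vec n) : vec n := fun i => (f i).@[v].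

Definition pimage n (f : pmap n) (A : pset n) : pset n :=
  fun w => nonzero w /\ exists v (l : CC), A v /\ l != 0 /\ w = (fun i => l * evalmap f v i).

Definition piter n (f : pmap n) (k : nat) (A : pset n) : pset n := iter k (pimage f) A.

Definition jacobian n (f : pmap n) : 'M[{mpoly CC[n.+1]}]_(n.+1) :=
  \matrix_(i, j) mderiv j (f i).
Definition critical_locus n (f : pmap n) : pset n := hyp (\det (jacobian f)).

Definition improper_iter n (f : pmap n) (r : nat) (H : pset n) : Prop :=
  forall Z, icomponent H Z ->
    exists idx : 'I_n.+1 -> nat,
      (forall j k : 'I_n.+1, (j < k)%N -> (idx j < idx k)%N) /\
      exists v, forall j, piter f (r * idx j) Z v.

Definition improper n (f : pmap n) (H : pset n) := improper_iter f 1 H.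

Definition dyn_improper n (f : pmap n) (H : pset n) : Prop :=
  forall r, (0 < r)%N -> improper_iter f r H.

Definition preperiodic n (f : pmap n) (X : pset n) : Prop :=
  forall Z, icomponent X Z ->
    exists s t : nat, s <> t /\ eq_p (piter f s Z) (piter f t Z).

Definition fmap_c n (d : nat) (c : CC) : pmap n :=
  fun i => if (i : nat) == 0%N then 'X_i ^+ d + c *: 'X_(inord 1) ^+ d
           else 'X_i ^+ d.
Arguments fmap_c : clear implicits.

(* The Jacobian matrix of f is triangular with diagonal entries d x_i^(d-1), so
   C_f is the union of the coordinate hyperplanes H_i = {x_i = 0}; each H_i is
   irreducible (a generic point of the line through two points of H_i avoids
   any two closed sets missing those points), so these are the components of
   C_f.  Each H_i contains a fixed point of f (e_0 if i > 0, e_2 if i = 0),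
   hence all its iterates meet and C_f is dynamically improper.  For i > 0,
   f(H_i) = H_i, while f maps the hyperplane {x_0 = a x_1} onto
   {x_0 = g(a) x_1}; as H_0 = {x_0 = 0 x_1}, f^k(H_0) = {x_0 = g^k(0) x_1}, and
   H_0 is preperiodic exactly when 0 is preperiodic under g. *)

From Pilot Require Import Defs.
From HB Require Import structures.
From mathcomp Require Import all_boot all_order all_algebra.
From mathcomp Require Import reals Rstruct complex mpoly ring.
From Stdlib Require Import Classical FunctionalExtensionality PropExtensionality.

Set Implicit Arguments.
Unset Strict Implicit.
Unset Printing Implicit Defensive.

Import GRing.Theory Num.Theory.
Local Open Scope ring_scope.

Lemma mderivXU n (i j : 'I_n) :
  mderiv j ('X_i : {mpoly CC[n]}) = ((i == j)%:R)%:MP.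
Proof.
rewrite mderivX mnm1E; case: eqP => [->|_]; last by rewrite scale0r mpolyC0.
have -> : (U_(j) - U_(j) = 0)%MM by apply/mnmP => k; rewrite mnmBE subnn mnm0E.
by rewrite mpolyX0 scale1r mpolyC1.
Qed.

Lemma meval_mderivXn n (v : 'I_n -> CC) (i j : 'I_n) k :
  (mderiv j ('X_i ^+ k : {mpoly CC[n]})).@[v] = (i == j)%:R * k%:R * v i ^+ k.-1.
Proof.
elim: k => [|k IHk]; first by rewrite expr0 -mpolyC1 mderivC meval0 !mulr0 mul0r.
rewrite exprS mderivM mevalD !mevalM IHk mderivXU mevalC mevalXU.
case: k {IHk} => [|k] /=.
  by rewrite !expr0 !mulr0 meval1 !mul0r !mulr1 mulr0 addr0.
rewrite rmorphXn /= mevalXU exprS -!natr1; ring.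
Qed.

Lemma inord1_val n : (0 < n)%N -> ((inord 1 : 'I_n.+1) : nat) = 1%N.
Proof. by move=> n_gt0; rewrite inordK. Qed.

Section Zariski.

Variable n : nat.
Implicit Types (A B X Z : pset n) (v w : vec n) (p : {mpoly CC[n.+1]}).

Lemma not_subset_p A B : ~ subset_p A B -> exists2 v, A v & ~ B v.
Proof.
move=> AB_false; apply: NNPP => none; apply: AB_false => v Av.
by apply: NNPP => Bv_false; apply: none; exists v.
Qed.

Lemma zclosed_hyp p k : p \is k.-homog -> zclosed (hyp p).
Proof.
move=> p_homog; exists (eq^~ p); split; first by move=> q ->; exists k.
move=> v; split=> [[v_nz pv]|[v_nz pv]]; split=> //; first by move=> q ->.
exact: pv.
Qed.

Lemma zclosed_eq_p A B : zclosed A -> eq_p A B -> zclosed B.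
Proof. by move=> [S [S_homog hA]] eqAB; exists S; split=> // v; rewrite -eqAB. Qed.

Lemma zclosed0 : zclosed (fun _ : vec n => False).
Proof.
have hyp1_closed := zclosed_hyp (dhomog1 CC mdeg).
apply: (zclosed_eq_p hyp1_closed) => v.
by split=> // -[_]; rewrite meval1 => /eqP; rewrite oner_eq0.
Qed.

Lemma not_zero_locus (S : {mpoly CC[n.+1]} -> Prop) X v :
  (forall v, X v <-> nonzero v /\ forall p, S p -> p.@[v] = 0) ->
  nonzero v -> ~ X v -> exists2 p, S p & p.@[v] != 0.
Proof.
move=> hX v_nz Xv_false; apply: NNPP => no_p; apply/Xv_false/hX; split=> // p Sp.
by apply: NNPP => pv; apply: no_p; exists p => //; apply/eqP.
Qed.

(* The union is cut out by the pairwise products of the equations. *)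
Lemma zclosedU A B : zclosed A -> zclosed B -> zclosed (fun v => A v \/ B v).
Proof.
move=> [SA [SA_homog hA]] [SB [SB_homog hB]].
exists (fun r => exists p q, [/\ SA p, SB q & r = p * q]); split.
  move=> _ [p [q [/SA_homog [k pk] /SB_homog [l ql] ->]]].
  by exists (k + l)%N; apply: dhomogM.
move=> v; split.
  move=> AvBv; split; first by case: AvBv => [/hA|/hB] [].
  move=> _ [p [q [Sp Sq ->]]]; rewrite mevalM.
  by case: AvBv => [/hA [_ /(_ p Sp) ->]|/hB [_ /(_ q Sq) ->]]; rewrite ?mul0r ?mulr0.
move=> [v_nz hpq]; have [|] := classic (A v); [by left | move=> Av_false; right].
have [p Sp pv] := not_zero_locus hA v_nz Av_false.
apply/hB; split=> // q Sq; apply/eqP.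
have /eqP : (p * q).@[v] = 0 by apply: hpq; exists p, q.
by rewrite mevalM mulf_eq0 (negbTE pv).
Qed.

Lemma zclosed_bigcup (I : eqType) (s : seq I) (A : I -> pset n) :
  (forall i, zclosed (A i)) -> zclosed (fun v => exists2 i, i \in s & A i v).
Proof.
move=> A_closed; elim: s => [|i s IHs].
  by apply: (zclosed_eq_p zclosed0) => v; split=> [|[]].
apply: (zclosed_eq_p (zclosedU (A_closed i) IHs)) => v; split.
  case=> [Aiv|[j js Ajv]]; first by exists i; rewrite ?mem_head.
  by exists j; rewrite ?inE ?js ?orbT.
by case=> j; rewrite inE => /orP [/eqP ->|js] Ajv; [left | right; exists j].
Qed.

Lemma zirreducible_sub_bigcup (I : eqType) (s : seq I) (A : I -> pset n) Z :
  zirreducible Z -> (forall i, zclosed (A i)) ->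
  subset_p Z (fun v => exists2 i, i \in s & A i v) ->
  exists2 i, i \in s & subset_p Z (A i).
Proof.
move=> [_ [[v Zv] Z_irr]] A_closed; elim: s => [|i s IHs] Z_sub.
  by have [] := Z_sub v Zv.
have [] := Z_irr (A i) _ (A_closed i) (zclosed_bigcup s A_closed).
- move=> u /Z_sub [j]; rewrite inE => /orP [/eqP ->|js] Aju; first by left.
  by right; exists j.
- by exists i; rewrite ?mem_head.
- by case/IHs=> j js ZAj; exists j; rewrite ?inE ?js ?orbT.
Qed.

Definition line_pt v w (t : CC) : vec n := fun k => v k + t * (w k - v k).

Definition line_poly v w p : {poly CC} :=
  mmap (@polyC _) (fun k => (v k)%:P + 'X * (w k - v k)%:P) p.

Lemma line_polyE v w p t : (line_poly v w p).[t] = p.@[line_pt v w t].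
Proof.
rewrite /line_poly /mmap mevalE horner_sum; apply: eq_bigr => m _.
rewrite hornerM hornerC /mmap1 horner_prod; congr (_ * _).
apply: eq_bigr => k _; rewrite horner_exp.
by rewrite hornerD hornerM hornerX !hornerC.
Qed.

Lemma line_pt0 v w : line_pt v w 0 = v.
Proof. by apply: functional_extensionality => k; rewrite /line_pt mul0r addr0. Qed.

Lemma line_pt1 v w : line_pt v w 1 = w.
Proof. by apply: functional_extensionality => k; rewrite /line_pt mul1r addrC subrK. Qed.

(* Two points outside A resp. B span a line; a generic point of it avoids A and B. *)
Lemma zirreducible_line_closed Z :
  zclosed Z -> (exists v, Z v) ->
  (forall v w t, Z v -> Z w -> nonzero (line_pt v w t) -> Z (line_pt v w t)) ->
  zirreducible Z.
Proof.
move=> Z_closed Z_ne Z_line; split=> //; split=> // A B [SA [_ hA]] [SB [_ hB]] Z_sub.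
have [SZ [_ hZ]] := Z_closed.
apply: NNPP => /not_or_and [ZA_false ZB_false].
have [v Zv Av_false] := not_subset_p ZA_false.
have [w Zw Bw_false] := not_subset_p ZB_false.
have [[j vj] _] := proj1 (hZ v) Zv.
have [p Sp pv] := not_zero_locus hA (proj1 (proj1 (hZ v) Zv)) Av_false.
have [q Sq qw] := not_zero_locus hB (proj1 (proj1 (hZ w) Zw)) Bw_false.
pose P := line_poly v w p; pose Q := line_poly v w q; pose L := line_poly v w 'X_j.
have P_nz : P != 0.
  by apply: contra_neq pv => P0; rewrite -[v](line_pt0 v w) -line_polyE -/P P0 horner0.
have Q_nz : Q != 0.
  by apply: contra_neq qw => Q0; rewrite -[w](line_pt1 v w) -line_polyE -/Q Q0 horner0.
have L_nz : L != 0.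
  apply: contra_neq vj => L0.
  by rewrite -[v](line_pt0 v w) -mevalXU -line_polyE -/L L0 horner0.
have PQL_nz : P * Q * L != 0 by rewrite !mulf_neq0.
have /closed_nonrootP [t] := PQL_nz.
rewrite /root !hornerM !mulf_eq0 !negb_or => /andP [/andP [Pt Qt] Lt].
rewrite !line_polyE mevalXU in Pt Qt Lt.
have Zu : Z (line_pt v w t) by apply: Z_line; last exists j.
case: (Z_sub _ Zu) => [/hA [_ /(_ p Sp)/eqP]|/hB [_ /(_ q Sq)/eqP]].
  by rewrite (negbTE Pt).
by rewrite (negbTE Qt).
Qed.

End Zariski.

Lemma pset_ext n (A B : pset n) : eq_p A B -> A = B.
Proof.
by move=> eqAB; apply: functional_extensionality => v; apply: propositional_extensionality.
Qed.

Section Components.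

Variables (n : nat) (I : finType) (A : I -> pset n) (X : pset n).
Hypothesis A_irr : forall i, zirreducible (A i).
Hypothesis A_antichain : forall i j, subset_p (A i) (A j) -> i = j.
Hypothesis X_bigcup : forall v, X v <-> exists i, A i v.

Let sub_some_A (Z : pset n) :
  zirreducible Z -> subset_p Z X -> exists i, subset_p Z (A i).
Proof.
move=> Z_irr ZX.
have A_closed i : zclosed (A i) by case: (A_irr i).
have Z_cover : subset_p Z (fun v => exists2 i, i \in index_enum I & A i v).
  by move=> v /ZX /X_bigcup [i Aiv]; exists i; rewrite ?mem_index_enum.
by have [i _ ZAi] := zirreducible_sub_bigcup Z_irr A_closed Z_cover; exists i.
Qed.

Let A_sub_X i : subset_p (A i) X.
Proof. by move=> v Aiv; apply/X_bigcup; exists i. Qed.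

Lemma icomponent_bigcup Z : icomponent X Z -> exists i, Z = A i.
Proof.
move=> [Z_irr [ZX Z_max]]; have [i ZAi] := sub_some_A Z_irr ZX.
exists i; apply: pset_ext => v; split; first exact: ZAi.
exact: (Z_max _ (A_irr i) ZAi (@A_sub_X i) v).
Qed.

Lemma bigcup_icomponent i : icomponent X (A i).
Proof.
split; first exact: A_irr; split; first exact: (@A_sub_X i).
move=> W W_irr AiW WX; have [j WAj] := sub_some_A W_irr WX.
suff -> : i = j by [].
by apply: A_antichain => v /AiW /WAj.
Qed.

End Components.

Definition coord_hyp n (i : 'I_n.+1) : pset n := hyp 'X_i.

Lemma coord_hypE n (i : 'I_n.+1) v : coord_hyp i v <-> nonzero v /\ v i = 0.
Proof. by rewrite /coord_hyp /hyp mevalXU. Qed.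

Lemma zclosed_coord_hyp n (i : 'I_n.+1) : zclosed (coord_hyp i).
Proof. by apply: (zclosed_hyp (k := 1)); rewrite dhomogX; apply/eqP/mdeg1. Qed.

(* The indicator of the complement of [i]: a point of [H_i] off every other [H_j]. *)
Lemma coord_hyp_indicator n (i : 'I_n.+1) :
  (0 < n)%N -> coord_hyp i (fun k => (k != i)%:R).
Proof.
move=> n_gt0; apply/coord_hypE; rewrite eqxx; split=> //.
have [k ki] : exists k : 'I_n.+1, k != i.
  have [->|i_nz] := eqVneq i ord0; last by exists ord0; rewrite eq_sym.
  by exists ord_max; rewrite -val_eqE /= -lt0n.
by exists k; rewrite ki oner_eq0.
Qed.

Lemma zirreducible_coord_hyp n (i : 'I_n.+1) : (0 < n)%N -> zirreducible (coord_hyp i).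
Proof.
move=> n_gt0; apply: zirreducible_line_closed.
- exact: zclosed_coord_hyp.
- by exists (fun k => (k != i)%:R); apply: coord_hyp_indicator.
move=> v w t /coord_hypE [_ vi] /coord_hypE [_ wi] u_nz.
by apply/coord_hypE; rewrite /line_pt vi wi subrr mulr0 addr0.
Qed.

Lemma coord_hyp_subset n (i j : 'I_n.+1) :
  (0 < n)%N -> subset_p (coord_hyp i) (coord_hyp j) -> i = j.
Proof.
move=> n_gt0 Hij; have /Hij /coord_hypE [_ /eqP] := coord_hyp_indicator i n_gt0.
by rewrite pnatr_eq0 eqb0 negbK => /eqP.
Qed.

Lemma hyp_prodXE n v :
  hyp (\prod_(i < n.+1) 'X_i) v <-> exists i : 'I_n.+1, coord_hyp i v.
Proof.
rewrite /hyp rmorph_prod /=; split.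
  move=> [v_nz /eqP/prodf_eq0 [i _]]; rewrite mevalXU => /eqP vi.
  by exists i; apply/coord_hypE.
move=> [i /coord_hypE [v_nz vi]]; split=> //; apply/eqP/prodf_eq0.
by exists i; rewrite // mevalXU vi.
Qed.

(* The hyperplane [x_0 = a x_1]; these are the iterates of [H_0]. *)
Definition slope_hyp n (a : CC) : pset n :=
  fun v => nonzero v /\ v ord0 = a * v (inord 1).
Arguments slope_hyp : clear implicits.

Lemma coord_hyp0_slope n : coord_hyp ord0 = slope_hyp n 0.
Proof. by apply: pset_ext => v; rewrite coord_hypE /slope_hyp mul0r. Qed.

Lemma slope_hyp_inj n : (0 < n)%N -> injective (slope_hyp n).
Proof.
move=> n_gt0 a b ab; pose v : vec n := fun k => if (k : nat) == 0%N then a else 1.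
have v1 : v (inord 1) = 1 by rewrite /v inord1_val.
have [] : slope_hyp n b v.
  by rewrite -ab; split; [exists (inord 1); rewrite v1 oner_eq0 | rewrite v1 mulr1].
by rewrite v1 mulr1.
Qed.

Definition basis_pt n (m : nat) : vec n := fun k => ((k : nat) == m)%:R.
Arguments basis_pt : clear implicits.

Lemma coord_hyp_basis_pt n (i : 'I_n.+1) m :
  (m <= n)%N -> (i : nat) != m -> coord_hyp i (basis_pt n m).
Proof.
move=> m_le_n i_neq_m; apply/coord_hypE; rewrite /basis_pt (negbTE i_neq_m).
by split=> //; exists (inord m); rewrite inordK // eqxx oner_eq0.
Qed.

Section Dynamics.

Variables (n : nat) (f : Defs.pmap n).
Implicit Types (A B : pset n) (v w : vec n).

Lemma piter_semiconj (T : Type) (A : T -> pset n) (g : T -> T) :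
  (forall a, pimage f (A a) = A (g a)) -> forall k a, piter f k (A a) = A (iter k g a).
Proof. by move=> fAg; elim=> [|k IHk] a //=; rewrite -fAg -IHk. Qed.

Lemma piter_invariant A : pimage f A = A -> forall k, piter f k A = A.
Proof. by move=> fA; elim=> [|k IHk] //=; rewrite IHk fA. Qed.

(* As [B] is a cone of nonzero vectors, [f(A) = B] can be checked on representatives. *)
Lemma pimage_cone A B :
  (forall w, B w -> nonzero w) ->
  (forall (l : CC) w, l != 0 -> B w -> B (fun i => l * w i)) ->
  (forall v, A v -> B (evalmap f v)) ->
  (forall w, B w -> exists2 v, A v & evalmap f v = w) ->
  pimage f A = B.
Proof.
move=> B_nz B_cone fAB B_lift; apply: pset_ext => w; split.
  by move=> [_ [v [l [Av [l_nz ->]]]]]; apply/B_cone/fAB.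
move=> Bw; have [v Av fvw] := B_lift w Bw; split; first exact: B_nz.
exists v, 1; split=> //; split; first exact: oner_neq0.
by apply: functional_extensionality => i; rewrite mul1r fvw.
Qed.

Lemma piter_fixed A v :
  A v -> nonzero v -> evalmap f v = v -> forall k, piter f k A v.
Proof.
move=> Av v_nz fv; elim=> [|k IHk] //=; split=> //.
exists v, 1; split=> //; split; first exact: oner_neq0.
by apply: functional_extensionality => i; rewrite mul1r fv.
Qed.

End Dynamics.

Section Fmap.

Variables (n d : nat) (c : CC).
Hypotheses (n_gt0 : (0 < n)%N) (d_gt1 : (1 < d)%N).
Local Notation f := (fmap_c n d c).

Let d_gt0 : (0 < d)%N. Proof. exact: ltnW. Qed.

Let inord1_neq0 : ((inord 1 : 'I_n.+1) : nat) == 0%N = false.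
Proof. by rewrite inord1_val. Qed.

Lemma evalmap_fmap_c (v : vec n) (k : 'I_n.+1) :
  evalmap f v k =
  if (k : nat) == 0%N then v k ^+ d + c * v (inord 1) ^+ d else v k ^+ d.
Proof.
rewrite /evalmap /fmap_c; case: eqP => _; last by rewrite rmorphXn /= mevalXU.
rewrite mevalD mevalZ [X in X + _ = _]rmorphXn [X in _ + _ * X = _]rmorphXn /=.
by rewrite !mevalXU.
Qed.

Lemma meval_mderiv_fmap_c (v : vec n) (i j : 'I_n.+1) :
  (mderiv j (f i)).@[v] =
  (i == j)%:R * d%:R * v i ^+ d.-1 +
  (if (i : nat) == 0%N then c * ((inord 1 == j)%:R * d%:R * v (inord 1) ^+ d.-1)
   else 0).
Proof.
rewrite /fmap_c; case: eqP => _; last by rewrite meval_mderivXn addr0.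
rewrite mderivD mevalD (@mderivZ _ _ j c) mevalZ.
by rewrite [X in X + _ = _]meval_mderivXn [X in _ + _ * X = _]meval_mderivXn.
Qed.

(* The transposed Jacobian is upper triangular: only f_0 involves a second variable. *)
Lemma meval_det_jacobian_fmap_c (v : vec n) :
  (\det (jacobian f)).@[v] = \prod_(i < n.+1) (d%:R * v i ^+ d.-1).
Proof.
have -> : (\det (jacobian f)).@[v] = \det (map_mx (meval v) (jacobian f))^T.
  by rewrite det_tr det_map_mx.
rewrite det_trig.
  apply: eq_bigr => i _; rewrite !mxE meval_mderiv_fmap_c eqxx mul1r.
  case: eqP => [i0|_]; last by rewrite addr0.
  have -> : (inord 1 == i) = false by apply/negbTE; rewrite -val_eqE /= i0 inord1_val.
  by rewrite !mul0r mulr0 addr0.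
apply/is_trig_mxP => i j lt_ij; rewrite !mxE meval_mderiv_fmap_c.
have -> : (j == i) = false by rewrite -val_eqE /= gtn_eqF.
have -> : ((j : nat) == 0%N) = false by rewrite eqn0Ngt (leq_ltn_trans _ lt_ij).
by rewrite !mul0r add0r.
Qed.

Lemma critical_locus_fmap_cE v :
  critical_locus f v <-> exists i : 'I_n.+1, coord_hyp i v.
Proof.
rewrite /critical_locus /hyp meval_det_jacobian_fmap_c //; split.
  move=> [v_nz /eqP/prodf_eq0 [i _]].
  rewrite mulf_eq0 pnatr_eq0 expf_eq0 (gtn_eqF d_gt0) /= => /andP [_ /eqP vi].
  by exists i; apply/coord_hypE.
move=> [i /coord_hypE [v_nz vi]]; split=> //; apply/eqP/prodf_eq0.
by exists i; rewrite // vi expr0n -subn1 subn_eq0 leqNgt d_gt1 mulr0.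
Qed.

Lemma icomponent_critical_locus_fmap_c Z :
  icomponent (critical_locus f) Z <-> exists i : 'I_n.+1, Z = coord_hyp i.
Proof.
have irr i := zirreducible_coord_hyp i n_gt0.
have antichain i j := @coord_hyp_subset n i j n_gt0.
split; first exact: (icomponent_bigcup irr (@critical_locus_fmap_cE)).
by move=> [i ->]; apply: (bigcup_icomponent irr antichain (@critical_locus_fmap_cE)).
Qed.

Lemma nonzero_evalmap_fmap_c x : nonzero (evalmap f x) <-> nonzero x.
Proof.
split=> [[k fxk]|[k xk]].
  apply: NNPP => x_zero.
  have x0 j : x j = 0 by have [//|xj] := eqVneq (x j) 0; case: x_zero; exists j.
  by move: fxk; rewrite evalmap_fmap_c !x0 expr0n (gtn_eqF d_gt0) mulr0 addr0 if_same eqxx.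
have [k0|k_nz] := eqVneq (k : nat) 0%N; last first.
  by exists k; rewrite evalmap_fmap_c (negbTE k_nz) expf_neq0.
have [x1|x1_nz] := eqVneq (x (inord 1)) 0; last first.
  by exists (inord 1); rewrite evalmap_fmap_c inord1_neq0 expf_neq0.
by exists k; rewrite evalmap_fmap_c k0 x1 expr0n (gtn_eqF d_gt0) mulr0 addr0 expf_neq0.
Qed.

(* A preimage of [w]; the [d]-th root [x0] of [w_0 - c w_1] is left free so that
   the preimage can be chosen inside a prescribed hyperplane. *)
Definition root_lift (x0 : CC) (w : vec n) : vec n :=
  fun k => if (k : nat) == 0%N then x0 else d.-root (w k).

Lemma evalmap_fmap_c_root_lift x0 w :
  x0 ^+ d + c * w (inord 1) = w ord0 -> evalmap f (root_lift x0 w) = w.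
Proof.
move=> x0E; apply: functional_extensionality => k.
rewrite evalmap_fmap_c /root_lift inord1_neq0 rootCK //.
case: eqP => [k0|_]; last exact: rootCK.
by have -> : k = ord0 by apply: val_inj.
Qed.

Lemma pimage_coord_hyp (i : 'I_n.+1) :
  (i : nat) != 0%N -> pimage f (coord_hyp i) = coord_hyp i.
Proof.
move=> i_nz; apply: pimage_cone.
- by move=> w /coord_hypE [].
- move=> l w l_nz /coord_hypE [[k wk] wi]; apply/coord_hypE.
  by rewrite wi mulr0; split=> //; exists k; rewrite mulf_neq0.
- move=> v /coord_hypE [v_nz vi]; apply/coord_hypE.
  rewrite nonzero_evalmap_fmap_c evalmap_fmap_c (negbTE i_nz) vi.
  by rewrite expr0n (gtn_eqF d_gt0).
move=> w /coord_hypE [w_nz wi].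
pose x := root_lift (d.-root (w ord0 - c * w (inord 1))) w.
have fx : evalmap f x = w by apply: evalmap_fmap_c_root_lift; rewrite rootCK // subrK.
exists x => //; apply/coord_hypE; split; first by rewrite -nonzero_evalmap_fmap_c fx.
by rewrite /x /root_lift (negbTE i_nz) wi rootC0.
Qed.

Lemma pimage_slope_hyp a :
  pimage f (slope_hyp n a) = slope_hyp n (a ^+ d + c).
Proof.
apply: pimage_cone.
- by move=> w [].
- move=> l w l_nz [[k wk] wa]; split; first by exists k; rewrite mulf_neq0.
  by rewrite wa mulrCA.
- move=> v [v_nz va]; split; first by rewrite nonzero_evalmap_fmap_c.
  rewrite !evalmap_fmap_c /= inord1_neq0 va exprMn; ring.
move=> w [w_nz wa].
pose x := root_lift (a * d.-root (w (inord 1))) w.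
have fx : evalmap f x = w.
  by apply: evalmap_fmap_c_root_lift; rewrite exprMn rootCK // wa mulrDl.
exists x => //; split; first by rewrite -nonzero_evalmap_fmap_c fx.
by rewrite /x /root_lift /= inord1_neq0.
Qed.

Lemma evalmap_fmap_c_basis_pt m : m != 1%N -> evalmap f (basis_pt n m) = basis_pt n m.
Proof.
have pow_bool (b : bool) : (b%:R : CC) ^+ d = b%:R.
  by case: b; rewrite ?expr1n // expr0n (gtn_eqF d_gt0).
move=> m_neq1; apply: functional_extensionality => k.
rewrite evalmap_fmap_c /basis_pt inord1_val // (eq_sym 1%N) (negbTE m_neq1).
by rewrite expr0n (gtn_eqF d_gt0) mulr0 addr0 if_same pow_bool.
Qed.

Lemma piter_coord_hyp (i : 'I_n.+1) k :
  (i : nat) != 0%N -> piter f k (coord_hyp i) = coord_hyp i.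
Proof. by move=> i_nz; apply/piter_invariant/pimage_coord_hyp. Qed.

Lemma piter_coord_hyp0 k :
  piter f k (coord_hyp ord0) = slope_hyp n (iter k (fun z => z ^+ d + c) 0).
Proof. by rewrite coord_hyp0_slope; apply: piter_semiconj => a; apply: pimage_slope_hyp. Qed.

End Fmap.

Theorem mainTheorem12 (n d : nat) (c : CC) :
  (2 <= n)%N -> (2 <= d)%N ->
  eq_p (critical_locus (fmap_c n d c)) (hyp (\prod_(i < n.+1) 'X_i)) /\
  dyn_improper (fmap_c n d c) (critical_locus (fmap_c n d c)) /\
  (preperiodic (fmap_c n d c) (critical_locus (fmap_c n d c)) <->
   exists s t : nat, s <> t /\
     iter s (fun z : CC => (z ^+ d + c)%R) 0%R = iter t (fun z : CC => (z ^+ d + c)%R) 0%R).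
Proof.
move=> n_ge2 d_ge2; have n_gt0 : (0 < n)%N by apply: ltnW.
have components := icomponent_critical_locus_fmap_c c n_gt0 d_ge2.
split; first by move=> v; rewrite critical_locus_fmap_cE // hyp_prodXE.
split.
  move=> r _ Z /components [i ->]; exists val; split=> //.
  have [m [m_le_n m_neq1 i_neq_m]] : exists m, [/\ (m <= n)%N, m != 1%N & (i : nat) != m].
    by have [i0|i_nz] := eqVneq (i : nat) 0%N; [exists 2%N; rewrite i0 | exists 0%N].
  have Him := coord_hyp_basis_pt m_le_n i_neq_m.
  exists (basis_pt n m) => j; apply: piter_fixed => //; first by case/coord_hypE: Him.
  exact: evalmap_fmap_c_basis_pt.
split.
  move=> preper; have [|s [t [st Est]]] := preper (coord_hyp ord0).
    by apply/components; exists ord0.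
  exists s, t; split=> //; apply: (slope_hyp_inj n_gt0).
  by rewrite -!(piter_coord_hyp0 c n_gt0 d_ge2); apply: pset_ext.
move=> [s [t [st Est]]] Z /components [i ->].
have [i0|i_nz] := eqVneq (i : nat) 0%N.
  have -> : i = ord0 by apply: val_inj.
  by exists s, t; split=> //; rewrite !piter_coord_hyp0 // Est.
by exists 0%N, 1%N; split=> //; rewrite !piter_coord_hyp.
Qed.
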